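(* For all $k\in\mathbb N_+$ and $T\ge0$, writing $q_c=\lfloor k/c\rfloor$ for $c\in\mathbb N_+$, $$v(k,T)\le\min_{c\in\mathbb N_+}\Big\{\big(q_cF(c)+F(k-c\,q_c)\big)\mathbb P(N(T)\ge q_c)+\sum_{n=0}^{q_c-1}\big(nF(c)+F(k-nc)\big)\mathbb P(N(T)=n)\Big\}.$$
   Context: Let $\lambda>0$ and let $N$ be a Poisson process with intensity $\lambda$, arrival times $0<\sigma_1<\sigma_2<\cdots$, and natural filtration $\mathcal F_t=\sigma(N_s:s\le t)$. Let $F:[0,\infty)\to[0,\infty)$ be strictly increasing and strictly convex with $F(0)=0$. For $k\in\{0,1,\dots\}$ let $\mathcal A_k$ be the set of $(\mathcal F_t)$-adapted, integer-valued, nonnegative, non-increasing processes $\xi$ with $\xi_0=k$ whose values change only at arrival times of $N$, and $v(k,T)=\inf_{\xi\in\mathcal A_k}\mathbb E[\sum_{i:\sigma_i\le T}F(\xi_{\sigma_i-}-\xi_{\sigma_i})+F(\xi_T)]$. $\lfloor\cdot\rfloor$ is the floor function. *)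

From HB Require Import structures.
From mathcomp Require Import all_boot all_order all_algebra.
From mathcomp Require Import all_classical all_reals all_analysis.
Set Implicit Arguments. Unset Strict Implicit. Unset Printing Implicit Defensive.
Import Order.TTheory GRing.Theory Num.Theory.
Import numFieldNormedType.Exports.
Local Open Scope classical_set_scope.
Local Open Scope ring_scope.

Section Defs.
Context {R : realType} {d : measure_display} {Omega : measurableType d}.
Variable P : probability Omega R.

Definition counting_paths (N : R -> Omega -> nat) : Prop :=
  forall w,
  [/\ N 0 w = 0%N,
      (forall s t, 0 <= s -> s <= t -> (N s w <= N t w)%N),
      (forall t, 0 <= t -> exists2 e, 0 < e &
          forall s, t <= s -> s < t + e -> N s w = N t w) &
      (forall t, 0 < t -> exists2 e, 0 < e &
          forall s, 0 <= s -> t - e < s -> s < t -> (N t w <= (N s w).+1)%N)].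

Definition poisson_process (lam : R) (N : R -> Omega -> nat) : Prop :=
  [/\ counting_paths N,
      (forall t (A : set nat), measurable (N t @^-1` A)),
      (forall s t (n : nat), 0 <= s -> s <= t ->
         P [set w | (N t w - N s w)%N = n] =
         (expR (- (lam * (t - s))) * (lam * (t - s)) ^+ n / (n`!)%:R)%:E) &
      (forall (n : nat) (tt : nat -> R) (m : nat -> nat),
         0 <= tt 0%N -> (forall i, (i < n)%N -> tt i <= tt i.+1) ->
         P (\bigcap_(i in [set j | (j < n)%N])
               [set w | (N (tt i.+1) w - N (tt i) w)%N = m i]) =
         (\prod_(i < n) P [set w | (N (tt i.+1) w - N (tt i) w)%N = m i])%E)].

Definition natural_filtration (N : R -> Omega -> nat) (t : R) : set (set Omega) :=
  <<s \bigcup_(s in [set s | 0 <= s <= t]) [set N s @^-1` A | A in [set: set nat]] >>.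

Definition arrival_time (N : R -> Omega -> nat) (i : nat) (w : Omega) : R :=
  inf [set t : R | 0 <= t /\ (i <= N t w)%N].

(* A process is a map xi : R -> Omega -> nat (only
   times t >= 0 matter); "values change only at arrival times" is encoded as:
   xi_t = xi_s whenever N_t = N_s, i.e. xi is constant on each [sigma_i, sigma_{i+1}). *)
Definition admissible (N : R -> Omega -> nat) (k : nat) (xi : R -> Omega -> nat) : Prop :=
  [/\ (forall w, xi 0 w = k),
      (forall t (n : nat), 0 <= t -> natural_filtration N t [set w | xi t w = n]),
      (forall w s t, 0 <= s -> s <= t -> (xi t w <= xi s w)%N) &
      (forall w s t, 0 <= s -> 0 <= t -> N s w = N t w -> xi s w = xi t w)].

Definition exec_cost (F : R -> R) (N : R -> Omega -> nat) (T : R)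
    (xi : R -> Omega -> nat) (w : Omega) : \bar R :=
  ((\sum_(1 <= i <oo | (arrival_time N i w <= T)%R)
      (F (lim ((fun t => (xi t w)%:R : R) @ (arrival_time N i w)^'-)
          - (xi (arrival_time N i w) w)%:R))%:E)
   + (F (xi T w)%:R)%:E)%E.

Definition value_fun (F : R -> R) (N : R -> Omega -> nat) (k : nat) (T : R) : \bar R :=
  ereal_inf [set (\int[P]_w exec_cost F N T xi w)%E | xi in admissible N k].

End Defs.

Definition strictly_convex_on_nonneg {R : realType} (F : R -> R) : Prop :=
  forall x y a, 0 <= x -> 0 <= y -> x != y -> 0 < a -> a < 1 ->
    F (a * x + (1 - a) * y) < a * F x + (1 - a) * F y.

Definition strictly_increasing_on_nonneg {R : realType} (F : R -> R) : Prop :=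
  forall x y, 0 <= x -> x < y -> F x < F y.

From HB Require Import structures.
From mathcomp Require Import all_boot all_order all_algebra.
From mathcomp Require Import all_classical all_reals all_analysis.
From mathcomp Require Import measurable_realfun zify.
Import Order.TTheory GRing.Theory Num.Theory.
Import numFieldNormedType.Exports.
Local Open Scope classical_set_scope.
Local Open Scope ring_scope.

(* Sell [c] shares at each of the first [q = k %/ c] arrivals and keep the rest
   until [T].  This strategy is admissible, and on the event [N_T = n] its cost
   is [g (minn n q)] with [g n = n F(c) + F(k - n c)].  Its expected cost is
   therefore the right-hand side, which bounds the infimum [v(k,T)]. *)

Lemma left_lim_near_cst {R : realFieldType} (f : R -> R) (a C e : R) : 0 < e ->
  (forall t, a - e < t -> t < a -> f t = C) -> lim (f @ a^'-) = C.
Proof.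
move=> e0 f_cst; apply: norm_lim_near_cst.
near=> t; apply: f_cst.
- by near: t; apply: nbhs_left_gt; rewrite ltrBlDr ltrDl.
- by near: t; exact: nbhs_left_lt.
Unshelve. all: by end_near.
Qed.

Lemma natrB_minn_pred {R : pzRingType} (k c q i : nat) : (0 < i)%N -> (c * q <= k)%N ->
  ((k - c * minn i.-1 q)%N%:R - (k - c * minn i q)%N%:R : R)
   = if (i <= q)%N then c%:R else 0.
Proof.
move=> i_gt0 cq_le_k; case: ifP => iq; last first.
  by rewrite !(minn_idPr _) ?subrr //; lia.
rewrite (minn_idPl iq) (minn_idPl (leq_trans (leq_pred i) iq)).
have -> : (k - c * i.-1 = k - c * i + c)%N.
  have : (c * i = c * i.-1 + c)%N by rewrite -mulnSr prednK.
  have : (c * i <= c * q)%N by rewrite leq_mul2l iq orbT.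
  lia.
by rewrite natrD addrAC subrr add0r.
Qed.

Lemma sumr_nat_if_leq {R : pzSemiRingType} (a : R) (m n : nat) :
  \sum_(1 <= i < n.+1) (if (i <= m)%N then a else 0) = (minn n m)%:R * a.
Proof.
elim: n => [|n IH]; first by rewrite big_geq // min0n mul0r.
rewrite big_nat_recr //= IH; case: (leqP n.+1 m) => h.
  by rewrite !(minn_idPl _) ?(ltnW h) // mulrSr mulrDl mul1r.
by rewrite !(minn_idPr _) ?addr0 //; lia.
Qed.

Lemma minn_indicatorE {R : pzRingType} (g : nat -> R) (m q : nat) :
  g (minn m q) = g q * (q <= m)%N%:R + \sum_(n < q) g n * (m == n)%:R.
Proof.
case: (leqP q m) => [qm|mq].
  rewrite mulr1 big1 ?addr0 // => n _.
  by rewrite (_ : (m == n) = false) ?mulr0 //; apply/eqP => mn; move: (ltn_ord n); lia.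
rewrite mulr0 add0r (bigD1 (Ordinal mq)) //= eqxx mulr1.
rewrite big1 ?addr0 // => n /eqP nm.
by rewrite (_ : (m == n) = false) ?mulr0 //; apply/eqP => mn; apply: nm; apply: val_inj.
Qed.

Section ArrivalTime.
Context {R : realType} {d : measure_display} {Omega : measurableType d}.
Context {N : R -> Omega -> nat} {w : Omega} {i : nat}.
Hypothesis N_counting : counting_paths N.

Let S := [set t : R | 0 <= t /\ (i <= N t w)%N].

Let S_lbound : has_lbound S. Proof. by exists 0 => t []. Qed.

Lemma arrival_time_le t : 0 <= t -> (i <= N t w)%N -> arrival_time N i w <= t.
Proof. by move=> t0 it; exact: (ge_inf S_lbound). Qed.

Lemma arrival_time_unreached :
  ~ (exists t, 0 <= t /\ (i <= N t w)%N) -> arrival_time N i w = 0.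
Proof.
move=> unreached; rewrite /arrival_time (_ : [set t | _] = set0) ?inf0 //.
by apply/seteqP; split => t // [t0 it]; apply: unreached; exists t.
Qed.

Section Reached.
Hypothesis reached : exists t, 0 <= t /\ (i <= N t w)%N.

Let S_inf : has_inf S.
Proof. by split => //; have [t St] := reached; exists t. Qed.

Lemma arrival_time_ge0 : 0 <= arrival_time N i w.
Proof. by apply: lb_le_inf; [case: S_inf | move=> t []]. Qed.

Lemma N_lt_arrival_time t : 0 <= t -> t < arrival_time N i w -> (N t w < i)%N.
Proof.
move=> t0 ts; rewrite ltnNge; apply/negP => it.
by have := arrival_time_le _ t0 it; rewrite leNgt ts.
Qed.

(* Right-continuity of the path at the infimum. *)
Lemma arrival_time_reached : (i <= N (arrival_time N i w) w)%N.
Proof.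
have [_ _ N_rc _] := N_counting w.
have [e e0 N_cst] := N_rc _ arrival_time_ge0.
have [t St ts] := inf_adherent e0 S_inf.
by rewrite -(N_cst t (arrival_time_le _ St.1 St.2) ts); case: St.
Qed.

Hypothesis i_gt0 : (0 < i)%N.

Lemma arrival_time_gt0 : 0 < arrival_time N i w.
Proof.
have [N0 _ _ _] := N_counting w.
rewrite lt_neqAle arrival_time_ge0 andbT; apply/eqP => s0.
by have := arrival_time_reached; rewrite -s0 N0; lia.
Qed.

Lemma jump_before_arrival_time : exists2 e, 0 < e &
  forall t, arrival_time N i w - e < t -> t < arrival_time N i w ->
    0 < t /\ (N (arrival_time N i w) w <= (N t w).+1)%N.
Proof.
have [_ _ _ N_jump] := N_counting w.
set s := arrival_time N i w.
have [e e0 He] := N_jump s arrival_time_gt0.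
exists (Num.min e s) => [|t h1 h2]; first by rewrite lt_min e0 arrival_time_gt0.
have t_gt0 : 0 < t by apply: le_lt_trans h1; rewrite subr_ge0 ge_min lexx orbT.
split=> //; apply: He (ltW t_gt0) _ h2.
by apply: le_lt_trans h1; rewrite lerD2l lerN2 ge_min lexx.
Qed.

Lemma N_arrival_time : N (arrival_time N i w) w = i.
Proof.
have [e e0 He] := jump_before_arrival_time.
set s := arrival_time N i w in He *.
have [h1 h2] : s - e < s - e / 2 /\ s - e / 2 < s.
  split; first by rewrite ltrD2l ltrN2 ltr_pdivrMr // ltr_pMr // ltr1n.
  by rewrite ltrBlDr ltrDl divr_gt0.
have [t_gt0 jump] := He _ h1 h2.
have := N_lt_arrival_time _ (ltW t_gt0) h2.
by have := arrival_time_reached; rewrite -/s; lia.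
Qed.

Lemma N_before_arrival_time : exists2 e, 0 < e &
  forall t, arrival_time N i w - e < t -> t < arrival_time N i w ->
    0 < t /\ N t w = i.-1.
Proof.
have [e e0 He] := jump_before_arrival_time.
exists e => // t h1 h2; have [t_gt0 jump] := He t h1 h2.
split=> //; have := N_lt_arrival_time _ (ltW t_gt0) h2.
by rewrite N_arrival_time in jump; lia.
Qed.

Lemma arrival_time_leE T : 0 <= T -> (arrival_time N i w <= T) = (i <= N T w)%N.
Proof.
have [_ N_mono _ _] := N_counting w.
move=> T0; apply/idP/idP => [sT|]; last exact: arrival_time_le.
by rewrite -{1}N_arrival_time; exact: N_mono arrival_time_ge0 sT.
Qed.

End Reached.
End ArrivalTime.

Section SellStrategy.
Context {R : realType} {d : measure_display} {Omega : measurableType d}.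
Variables (N : R -> Omega -> nat) (k c q : nat).
Hypothesis N_counting : counting_paths N.

(* Negative times are clamped to [0], so that the left limit at time [0]
   (the junk arrival time of a never-reached index) is [k]. *)
Definition sell_strategy : R -> Omega -> nat :=
  fun t w => (k - c * minn (if (t < 0)%R then 0 else N t w) q)%N.

Lemma sell_strategyE t w : 0 <= t -> sell_strategy t w = (k - c * minn (N t w) q)%N.
Proof. by move=> t0; rewrite /sell_strategy ltNge t0. Qed.

Lemma sell_strategy_admissible : admissible N k sell_strategy.
Proof.
split.
- move=> w; have [N0 _ _ _] := N_counting w.
  by rewrite sell_strategyE // N0 min0n muln0 subn0.
- move=> t n t0; apply: sub_gen_smallest.
  exists t; first by rewrite /= t0 lexx.
  exists [set m | (k - c * minn m q)%N = n] => //.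
  by apply/seteqP; split => w /=; rewrite sell_strategyE.
- move=> w s t s0 st; have [_ N_mono _ _] := N_counting w.
  rewrite !sell_strategyE ?(le_trans s0 st) //.
  apply/leq_sub2l/leq_mul => //; have := N_mono s t s0 st; lia.
- by move=> w s t s0 t0 Nst; rewrite !sell_strategyE // Nst.
Qed.

Variable F : R -> R.
Hypotheses (F0 : F 0 = 0) (cq_le_k : (c * q <= k)%N).

Let xi_left_lim (w : Omega) (s : R) : R :=
  lim ((fun t => (sell_strategy t w)%:R : R) @ s^'-).

Lemma exec_cost_term_sell_strategy w i T : 0 <= T -> (0 < i)%N ->
  (if arrival_time N i w <= T then
     (F (xi_left_lim w (arrival_time N i w)
         - (sell_strategy (arrival_time N i w) w)%:R))%:E else 0%E)
  = (if (i <= minn (N T w) q)%N then F c%:R else 0)%:E.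
Proof.
move=> T0 i_gt0; have [N0 _ _ _] := N_counting w.
have [reached|unreached] := pselect (exists t, 0 <= t /\ (i <= N t w)%N).
  have [e e0 N_before] := N_before_arrival_time N_counting reached i_gt0.
  have s_gt0 := arrival_time_gt0 N_counting reached i_gt0.
  rewrite /xi_left_lim (@left_lim_near_cst _ _ _ (k - c * minn i.-1 q)%N%:R e) //;
    last by move=> t h1 h2; have [t_gt0 Nt] := N_before t h1 h2;
            rewrite sell_strategyE ?(ltW t_gt0) // Nt.
  rewrite sell_strategyE ?(ltW s_gt0) // N_arrival_time // natrB_minn_pred //.
  rewrite arrival_time_leE // leq_min.
  by case: (i <= N T w)%N; case: (i <= q)%N; rewrite /= ?F0.
have NT_lt_i : (N T w < i)%N by rewrite ltnNge; apply/negP => iT; apply: unreached; exists T.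
rewrite arrival_time_unreached // T0 leq_min leqNgt NT_lt_i /=.
rewrite /xi_left_lim (@left_lim_near_cst _ _ _ k%:R 1) // => [|t _ t_lt0];
  last by rewrite /sell_strategy t_lt0 min0n muln0 subn0.
by rewrite sell_strategyE // N0 min0n muln0 subn0 subrr F0.
Qed.

Lemma exec_cost_sell_strategy T w : 0 <= T ->
  exec_cost F N T sell_strategy w =
  ((minn (N T w) q)%:R * F c%:R + F (k - c * minn (N T w) q)%N%:R)%:E.
Proof.
move=> T0; rewrite /exec_cost sell_strategyE // EFinD; congr (_ + _)%E.
apply: lim_near_cst => //; exists q.+1 => // -[//|n] /= q_lt_n.
rewrite big_mkcond /=.
under eq_big_nat => i /andP[i_gt0 _] do rewrite exec_cost_term_sell_strategy //.
rewrite sumEFin sumr_nat_if_leq (minn_idPr _) // geq_min; lia.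
Qed.

End SellStrategy.

Section IntegralMinn.
Context {R : realType} {d : measure_display} {Omega : measurableType d}.
Variable mu : {finite_measure set Omega -> \bar R}.

Lemma integral_scaled_indic (A : set Omega) (a : R) : measurable A -> 0 <= a ->
  (\int[mu]_w (a * \1_A w)%:E = (a * fine (mu A))%:E)%E.
Proof.
move=> mA a0; under eq_integral do rewrite EFinM.
rewrite ge0_integralZl_EFin //; last exact/measurable_EFinP/measurable_indic.
by rewrite integral_indic // setIT EFinM fineK //; exact: fin_num_measure.
Qed.

Lemma measurable_scaled_indic (A : set Omega) (a : R) : measurable A ->
  measurable_fun setT (fun w => (a * \1_A w)%:E).
Proof. by move=> mA; apply/measurable_EFinP/measurable_funM. Qed.

Variables (X : Omega -> nat) (g : nat -> R) (q : nat).
Hypotheses (X_measurable : forall A, measurable (X @^-1` A))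
           (g_ge0 : forall n, (n <= q)%N -> 0 <= g n).

Lemma integral_minn_nat :
  (\int[mu]_w (g (minn (X w) q))%:E =
   (g q * fine (mu [set w | (q <= X w)%N])
    + \sum_(0 <= n < q) g n * fine (mu [set w | X w = n]))%:E)%E.
Proof.
set B := [set w | (q <= X w)%N]; set A := fun n => [set w | X w = n].
have mB : measurable B by exact: (X_measurable [set m | (q <= m)%N]).
have mA n : measurable (A n) by exact: (X_measurable [set n]).
have g_indic_ge0 (n : 'I_q) w : (0 <= (g n * \1_(A n) w)%:E)%E.
  by rewrite lee_fin mulr_ge0 ?g_ge0 ?(ltnW (ltn_ord n)) // indicE ler0n.
rewrite (eq_integral (fun w => (g q * \1_B w)%:E +
    \sum_(n < q) (g n * \1_(A n) w)%:E)%E); last first.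
  move=> w _; rewrite minn_indicatorE [X in _ = (_ + X)%E]sumEFin -EFinD indicE.
  have -> : (w \in B) = (q <= X w)%N by apply/idP/idP => [/set_mem|/mem_set].
  congr (_ + _)%:E; apply: eq_bigr => n _; rewrite indicE.
  by have -> : (w \in A n) = (X w == n) by apply/idP/eqP => [/set_mem|/mem_set].
rewrite ge0_integralD //; first last.
- by apply: emeasurable_sum => n; exact: measurable_scaled_indic.
- by move=> w _; exact: sume_ge0.
- exact: measurable_scaled_indic.
- by move=> w _; rewrite lee_fin mulr_ge0 ?g_ge0 // indicE ler0n.
rewrite ge0_integral_sum //; last by move=> n; exact: measurable_scaled_indic.
rewrite integral_scaled_indic ?g_ge0 //.
rewrite (eq_bigr (fun n : 'I_q => (g n * fine (mu (A n)))%:E)); last first.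
  by move=> n _; rewrite integral_scaled_indic ?g_ge0 ?(ltnW (ltn_ord n)).
by rewrite sumEFin -EFinD big_mkord.
Qed.

End IntegralMinn.

Theorem lemma2p2 (R : realType) (d : measure_display) (Omega : measurableType d)
  (P : probability Omega R) (lam : R) (N : R -> Omega -> nat) (F : R -> R)
  (k : nat) (T : R) :
  0 < lam -> poisson_process P lam N ->
  F 0 = 0 -> (forall x, 0 <= x -> 0 <= F x) ->
  strictly_increasing_on_nonneg F -> strictly_convex_on_nonneg F ->
  (0 < k)%N -> 0 <= T ->
  forall c : nat, (0 < c)%N ->
  let q := (k %/ c)%N in
  (value_fun P F N k T <=
   (((q%:R * F c%:R + F (k%:R - c%:R * q%:R)) * fine (P [set w | (q <= N T w)%N])
     + \sum_(0 <= n < q)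
         ((n%:R * F c%:R + F (k%:R - n%:R * c%:R)) * fine (P [set w | (N T w = n)%N]))))%:E)%E.
Proof.
move=> _ [N_counting N_measurable _ _] F0 F_ge0 _ _ _ T_ge0 c _ /=.
set q := (k %/ c)%N.
pose g n := n%:R * F c%:R + F (k%:R - n%:R * c%:R).
have cn_le_k n : (n <= q)%N -> (c * n <= k)%N.
  move=> nq; apply: leq_trans (leq_mul (leqnn c) nq) _.
  by rewrite mulnC leq_divM.
have g_ge0 n : (n <= q)%N -> 0 <= g n.
  move=> nq; rewrite addr_ge0 ?mulr_ge0 ?F_ge0 //.
  by rewrite subr_ge0 -natrM ler_nat mulnC cn_le_k.
have cost w : exec_cost F N T (sell_strategy N k c q) w = (g (minn (N T w) q))%:E.
  rewrite exec_cost_sell_strategy ?cn_le_k // /g natrB ?cn_le_k ?geq_minr //.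
  by rewrite natrM [_ * c%:R]mulrC.
apply: le_trans; first apply: ereal_inf_lbound.
  by exists (sell_strategy N k c q) => //; exact: sell_strategy_admissible.
rewrite (eq_integral (fun w => (g (minn (N T w) q))%:E)) => [|w _]; last exact: cost.
by rewrite integral_minn_nat // /g [c%:R * _]mulrC.
Qed.
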